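(* Let $n\ge 2$, $1\le i\le n-1$, $0\le j\le n-1$, and let $G^*$ be a graph on $n$ vertices with at most one loop per vertex, with adjacency eigenvalues $\lambda_1\ge\cdots\ge\lambda_n$ and average degree $d$. If $\lambda_{i+1}-\lambda_{n-j}=\frac{n}{2}\sqrt{\frac{i+j+1}{i(j+1)}}$, then $\lambda_{i+1}\ge 0\ge\lambda_{n-j}$, $\lambda_1=d=\frac n2$, $\lambda_2=\cdots=\lambda_{i+1}=\frac n2\sqrt{\frac{j+1}{i(i+j+1)}}$, $\lambda_{n-j}=\cdots=\lambda_n=-\frac n2\sqrt{\frac{i}{(j+1)(i+j+1)}}$, and $\lambda_{i+2}=\cdots=\lambda_{n-j-1}=0$. *)

From HB Require Import structures.
From mathcomp Require Import all_boot all_order all_algebra.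
Set Implicit Arguments. Unset Strict Implicit. Unset Printing Implicit Defensive.
Import Order.TTheory GRing.Theory Num.Theory.
Local Open Scope ring_scope.

(* A graph on vertex set 'I_n with at most one loop per vertex is given by a
   symmetric relation e (e v v = true means a loop at v). *)
Definition adjmx (R : nzRingType) (n : nat) (e : rel 'I_n) : 'M[R]_n :=
  \matrix_(u, v) (e u v)%:R.

Definition avg_degree (R : fieldType) (n : nat) (e : rel 'I_n) : R :=
  (\sum_(u < n) \sum_(v < n) adjmx R e u v) / n%:R.

Definition sorted_spectrum (R : rcfType) (n : nat) (A : 'M[R]_n) (lam : seq R) :=
  [/\ size lam = n, sorted >=%R lam & char_poly A = \prod_(x <- lam) ('X - x%:P)].

(* 1-based access: eig lam k = lambda_k *)
Definition eig (R : rcfType) (lam : seq R) (k : nat) : R := nth 0 lam k.-1.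

From HB Require Import structures.
From mathcomp Require Import all_boot all_order all_algebra.
From mathcomp Require Import complex.
From mathcomp Require Import ring lra zify.
Set Implicit Arguments.
Unset Strict Implicit.
Unset Printing Implicit Defensive.

Import Order.TTheory GRing.Theory Num.Theory.
Local Open Scope ring_scope.

(* The adjacency matrix A is a symmetric 0/1 matrix, so its eigenvalues
   satisfy sum_k lambda_k^2 = tr A^2 = n d, and lambda_1 >= d by the Rayleigh
   quotient of the all-ones vector.  Put s = lambda_(i+1), t = lambda_(n-j)
   and s+ = max(s,0), t- = max(-t,0).  The i eigenvalues lambda_2..lambda_(i+1)
   are >= s and the j+1 eigenvalues lambda_(n-j)..lambda_n are <= t, hence
     n^2/4 >= n d - d^2 >= i s+^2 + (j+1) t-^2
           >= i(j+1)/(i+j+1) (s+ + t-)^2 >= i(j+1)/(i+j+1) (s - t)^2,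
   the third step being a weighted Cauchy-Schwarz inequality.  The hypothesis
   says that both ends are equal, so every inequality is tight, and this
   determines all the eigenvalues. *)

Lemma ler_sum_nat_eq (R : numDomainType) (a b : nat) (F G : nat -> R) :
  (forall k, (a <= k < b)%N -> G k <= F k) ->
  \sum_(a <= k < b) F k = \sum_(a <= k < b) G k ->
  forall k, (a <= k < b)%N -> F k = G k.
Proof.
move=> leGF /eqP; rewrite -subr_eq0 -sumrB big_nat psumr_eq0; last first.
  by move=> k /leGF; rewrite subr_ge0.
move=> /allP eqFG k kab; apply/eqP; rewrite -subr_eq0.
by have := eqFG k; rewrite mem_index_iota kab => /(_ isT) /implyP; apply.
Qed.

Lemma sqr_max0_le (R : realDomainType) (x y : R) :
  x <= y -> Num.max x 0 ^+ 2 <= y ^+ 2.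
Proof. by case: (lerP 0 x) => [x0|/ltW x0] xy; rewrite ?max_l ?max_r //; nra. Qed.

Lemma weighted_sqr_sum (R : fieldType) (a b x y : R) : a + b != 0 ->
  a * x ^+ 2 + b * y ^+ 2
    = a * b / (a + b) * (x + y) ^+ 2 + (a * x - b * y) ^+ 2 / (a + b).
Proof. by move=> ab_neq0; field. Qed.

Lemma balanced_sqr (R : fieldType) (a b s t g : R) :
  a != 0 -> b != 0 -> a + b != 0 ->
  a * s + b * t = 0 -> a * b * (s - t) ^+ 2 = (a + b) * g ->
  s ^+ 2 = g * (b / (a * (a + b))) /\ t ^+ 2 = g * (a / (b * (a + b))).
Proof.
move=> a0 b0 ab0 bal gap.
have dE : (s - t) ^+ 2 = (a + b) * g / (a * b).
  by rewrite -gap; field; rewrite a0 b0.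
have sE : s = b * (s - t) / (a + b).
  by apply: (mulfI ab0); rewrite mulrCA divff // mulr1 -[RHS]add0r -bal; ring.
have tE : t = - (a * (s - t) / (a + b)).
  by apply: (mulfI ab0); rewrite mulrN mulrCA divff // mulr1 -[RHS]add0r -bal; ring.
by split; [rewrite sE | rewrite tE sqrrN]; rewrite !exprMn dE; field; rewrite a0 b0 ab0.
Qed.

Lemma sqrtr_value (R : rcfType) (x a c : R) :
  0 <= x -> 0 <= a -> x ^+ 2 = a ^+ 2 * c -> x = a * Num.sqrt c.
Proof.
move=> x0 a0 xE; rewrite -(ger0_norm x0) -sqrtr_sqr xE sqrtrM ?sqr_ge0 //.
by rewrite sqrtr_sqr ger0_norm.
Qed.

Lemma char_poly_similar (F : fieldType) n (P B : 'M[F]_n) : P \in unitmx ->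
  char_poly (invmx P *m B *m P) = char_poly B.
Proof.
move=> Pu.
have E : char_poly_mx (invmx P *m B *m P) =
   map_mx polyC (invmx P) *m char_poly_mx B *m map_mx polyC P.
  rewrite /char_poly_mx mulmxBr mulmxBl !map_mxM; congr (_ - _).
  by rewrite mul_mx_scalar -scalemxAl -map_mxM mulVmx // map_mx1 scalemx1.
rewrite /char_poly E !det_mulmx !det_map_mx /= mulrC mulrA -rmorphM.
by rewrite -det_mulmx mulmxV // det1 rmorph1 mul1r.
Qed.

Local Open Scope sesquilinear_scope.

Lemma sum_conj_diag_mx (R : rcfType) n (P : 'M[R[i]]_n) (D : 'rV[R[i]]_n) :
  \sum_u \sum_v (P^t* *m diag_mx D *m P) u v
    = \sum_k D 0 k * ((\sum_v P k v) * (\sum_v P k v)^*).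
Proof.
under eq_bigr do under eq_bigr do rewrite mul_mx_diag mxE.
rewrite exchange_big /=; under eq_bigr do rewrite exchange_big /=.
rewrite exchange_big /=; apply: eq_bigr => k _.
rewrite rmorph_sum mulr_suml mulr_sumr; apply: eq_bigr => v _.
rewrite !mulr_sumr; apply: eq_bigr => u _; rewrite !mxE; ring.
Qed.

Section RealSymmetricSpectrum.

Variables (R : rcfType) (n : nat) (A : 'M[R]_n) (lam : seq R).
Hypothesis A_sym : A^T = A.
Hypothesis charA : char_poly A = \prod_(x <- lam) ('X - x%:P).

Local Notation toC := (real_complex R).
Local Notation Ac := (map_mx toC A).

Lemma real_symmetric_spectral :
  exists2 P : 'M[R[i]]_n, P \is unitarymx &
  exists2 D : 'rV[R[i]]_n, Ac = P^t* *m diag_mx D *m P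
    & perm_eq [seq D 0 k | k <- enum 'I_n] (map toC lam).
Proof.
have Ac_herm : Ac \is hermsymmx.
  apply: realsym_hermsym.
    by apply/is_hermitianmxP; rewrite expr0 scale1r map_mx_id // map_trmx A_sym.
  by apply/mxOverP => u v; rewrite mxE; apply/complex_realP; eexists.
have /orthomx_spectralP AcE := hermitian_normalmx Ac_herm.
set P := spectralmx Ac in AcE; set D := spectral_diag Ac in AcE.
have Pu : P \is unitarymx by apply: spectral_unitarymx.
exists P => //; exists D; first by rewrite {1}AcE invmx_unitary.
apply: prod_XsubC_eq; transitivity (char_poly Ac).
  rewrite AcE char_poly_similar ?spectral_unit // char_poly_trig ?diag_mx_is_trig //.
  by rewrite big_map big_enum /=; apply: eq_bigr => k _; rewrite mxE eqxx.
by rewrite -map_char_poly charA map_prod_XsubC big_map.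
Qed.

Lemma sum_sqr_spectrum : \sum_(x <- lam) x ^+ 2 = \tr (A *m A).
Proof.
have [P /unitarymxP PPt [D AcE Dlam]] := real_symmetric_spectral.
apply: complexI; rewrite -trace_map_mx map_mxM AcE.
have -> : P^t* *m diag_mx D *m P *m (P^t* *m diag_mx D *m P)
    = P^t* *m (diag_mx D *m diag_mx D *m P).
  by rewrite !mulmxA -[_ *m P *m P^t*]mulmxA PPt mulmx1.
rewrite mxtrace_mulC -!mulmxA PPt mulmx1 mulmx_diag mxtrace_diag.
rewrite rmorph_sum (eq_bigr (fun x => toC x ^+ 2)) => [|x _]; last exact: rmorphXn.
rewrite -(big_map toC predT (fun y => y ^+ 2)) -(perm_big _ Dlam) big_map big_enum /=.
by apply: eq_bigr => k _; rewrite mxE.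
Qed.

Lemma sum_mx_le_spectral_bound (b : R) :
  {in lam, forall x, x <= b} -> \sum_u \sum_v A u v <= n%:R * b.
Proof.
move=> lam_le_b.
have [P /unitarymxP PPt [D AcE Dlam]] := real_symmetric_spectral.
have D_le_b k : D 0 k <= toC b.
  have /mapP[x x_lam ->] : D 0 k \in map toC lam.
    by rewrite -(perm_mem Dlam); apply: map_f; rewrite mem_enum.
  by rewrite lecR lam_le_b.
pose z k := \sum_v P k v.
have sum_Ac : toC (\sum_u \sum_v A u v) = \sum_k D 0 k * (z k * (z k)^*).
  rewrite -sum_conj_diag_mx -AcE rmorph_sum; apply: eq_bigr => u _.
  by rewrite rmorph_sum; apply: eq_bigr => v _; rewrite mxE.
have sum_z : \sum_k z k * (z k)^* = n%:R.
  transitivity (\sum_k (const_mx 1 : 'rV_n) 0 k * (z k * (z k)^*)).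
    by apply: eq_bigr => k _; rewrite mxE mul1r.
  rewrite -sum_conj_diag_mx diag_const_mx mulmx1 (mulmx1C PPt).
  rewrite (eq_bigr (fun=> 1)) ?sumr_const ?card_ord //.
  move=> u _; rewrite (bigD1 u) //= big1 ?addr0 => [|v vu]; rewrite mxE ?eqxx //.
  by rewrite eq_sym (negbTE vu).
rewrite -lecR sum_Ac rmorphM /= rmorph_nat -sum_z mulr_suml.
by apply: ler_sum => k _; rewrite [X in _ <= X]mulrC ler_wpM2r ?mul_conjC_ge0 ?D_le_b.
Qed.

End RealSymmetricSpectrum.

Local Close Scope sesquilinear_scope.

Lemma sorted_ge_nth (R : numDomainType) (s : seq R) : sorted >=%R s ->
  forall a b, (a <= b < size s)%N -> nth 0 s b <= nth 0 s a.
Proof.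
move=> s_sorted a b /andP[ab b_lt].
by apply: (sorted_leq_nth ge_trans lexx) => //; rewrite inE (leq_ltn_trans ab).
Qed.

Lemma trmx_adjmx (R : nzRingType) n (e : rel 'I_n) :
  symmetric e -> (adjmx R e)^T = adjmx R e.
Proof. by move=> e_sym; apply/matrixP => u v; rewrite !mxE e_sym. Qed.

Lemma mxtrace_adjmx_sqr (R : nzRingType) n (e : rel 'I_n) : symmetric e ->
  \tr (adjmx R e *m adjmx R e) = \sum_u \sum_v adjmx R e u v.
Proof.
move=> e_sym; apply: eq_bigr => u _; rewrite mxE; apply: eq_bigr => v _.
by rewrite !mxE e_sym; case: (e v u); rewrite ?mulr1 ?mulr0.
Qed.

Lemma sum_adjmxE (R : numFieldType) n (e : rel 'I_n) : (0 < n)%N ->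
  \sum_u \sum_v adjmx R e u v = n%:R * avg_degree R e.
Proof. by move=> n_gt0; rewrite mulrC divfK // pnatr_eq0 -lt0n. Qed.

(* [f k] stands for lambda_(k+1), so [f (n - j).-1] is lambda_(n-j). *)
Section GapExtremal.

Variables (R : rcfType) (n i j : nat) (f : nat -> R) (d : R).
Hypothesis i_gt0 : (0 < i)%N.
Hypothesis i_lt_n : (i < n)%N.
Hypothesis f_nonincr : forall a b, (a <= b < n)%N -> f b <= f a.
Hypothesis sum_sqr_f : \sum_(0 <= k < n) f k ^+ 2 = n%:R * d.
Hypothesis d_le_f0 : d <= f 0.
Hypothesis gap :
  f i - f (n - j).-1 = n%:R / 2 * Num.sqrt ((i + j + 1)%:R / (i * j.+1)%:R).

Local Notation p := (n - j).-1.
Local Notation N := (n%:R : R).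
Local Notation I := (i%:R : R).
Local Notation J := (j.+1%:R : R).

Let N_gt0 : 0 < N. Proof. by rewrite ltr0n; lia. Qed.
Let I_gt0 : 0 < I. Proof. by rewrite ltr0n. Qed.
Let J_gt0 : 0 < J. Proof. by rewrite ltr0n. Qed.

Let gap_ratioE : (i + j + 1)%:R / (i * j.+1)%:R = (I + J) / (I * J) :> R.
Proof. by rewrite natrM -natrD addn1 addnS. Qed.

Lemma gap_sqr : I * J * (f i - f p) ^+ 2 = (I + J) * (N / 2) ^+ 2.
Proof.
rewrite gap gap_ratioE exprMn sqr_sqrtr; last by rewrite ltW // divr_gt0 ?mulr_gt0 ?addr_gt0.
by field; rewrite [1 + _]addrC natr1 !pnatr_eq0; lia.
Qed.

Lemma gap_gt0 : 0 < f i - f p.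
Proof.
rewrite gap mulr_gt0 ?divr_gt0 // sqrtr_gt0 gap_ratioE.
by rewrite divr_gt0 ?mulr_gt0 ?addr_gt0.
Qed.

Lemma gap_indices : [/\ (i < p)%N, (p < n)%N & (n - p = j.+1)%N].
Proof.
have i_lt_p : (i < p)%N.
  rewrite ltnNge; apply/negP => p_le_i.
  have := gap_gt0; have := @f_nonincr p i; rewrite p_le_i i_lt_n => /(_ isT).
  lra.
split=> //; lia.
Qed.

Local Notation sp := (Num.max (f i) 0).
Local Notation tp := (Num.max (- f p) 0).
Local Notation S_up := (\sum_(1 <= k < i.+1) f k ^+ 2).
Local Notation S_mid := (\sum_(i.+1 <= k < p) f k ^+ 2).
Local Notation S_low := (\sum_(p <= k < n) f k ^+ 2).

Lemma sum_sqr_split : N * d = f 0 ^+ 2 + S_up + S_mid + S_low.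
Proof.
have [i_lt_p p_lt_n _] := gap_indices.
rewrite -sum_sqr_f big_ltn ?(leq_ltn_trans _ i_lt_n) //.
rewrite (@big_cat_nat _ _ _ i.+1) //= (@big_cat_nat _ _ _ p i.+1 n) ?(ltnW p_lt_n) //.
by rewrite !addrA.
Qed.

Lemma upper_block_ge : I * sp ^+ 2 <= S_up.
Proof.
have -> : I * sp ^+ 2 = \sum_(1 <= k < i.+1) sp ^+ 2.
  by rewrite sumr_const_nat subn1 mulr_natl.
apply: ler_sum_nat => k /andP[_ k_le_i].
by apply/sqr_max0_le/f_nonincr; rewrite -ltnS k_le_i.
Qed.

Lemma lower_block_ge : J * tp ^+ 2 <= S_low.
Proof.
have [_ _ n_p] := gap_indices; rewrite mulr_natl -n_p -sumr_const_nat.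
apply: ler_sum_nat => k kpn; rewrite -[f k ^+ 2]sqrrN.
by apply/sqr_max0_le; rewrite lerN2 f_nonincr.
Qed.

Lemma gap_equality_case :
  [/\ f i - f p = sp + tp, I * sp = J * tp, S_up = I * sp ^+ 2,
      S_low = J * tp ^+ 2 & [/\ S_mid = 0, f 0 = d & d = N / 2]].
Proof.
have gap_pos := gap_gt0; have gap2 := gap_sqr.
have split := sum_sqr_split.
have up := upper_block_ge; have low := lower_block_ge.
have sp_ge : f i <= sp by rewrite le_max lexx.
have tp_ge : - f p <= tp by rewrite le_max lexx.
have sp0 : 0 <= sp by rewrite le_max lexx orbT.
have tp0 : 0 <= tp by rewrite le_max lexx orbT.
have mid0 : 0 <= S_mid by rewrite sumr_ge0 // => k _; rewrite sqr_ge0.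
have d0 : 0 <= d.
  by rewrite -(pmulr_rge0 _ N_gt0) -sum_sqr_f sumr_ge0 // => k _; rewrite sqr_ge0.
have f0_sqr : d ^+ 2 <= f 0 ^+ 2 by rewrite lerXn2r // ?nnegrE (le_trans d0).
set w := I * J / (I + J).
have w_gt0 : 0 < w by rewrite divr_gt0 ?mulr_gt0 ?addr_gt0.
have gap_w : w * (f i - f p) ^+ 2 = (N / 2) ^+ 2.
  by rewrite /w mulrAC gap2 mulrC mulKf // gt_eqF ?addr_gt0.
have weighted_CS : I * sp ^+ 2 + J * tp ^+ 2
    = w * (sp + tp) ^+ 2 + (I * sp - J * tp) ^+ 2 / (I + J).
  by rewrite weighted_sqr_sum // gt_eqF ?addr_gt0.
have gap_le : w * (f i - f p) ^+ 2 <= w * (sp + tp) ^+ 2.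
  by rewrite ler_pM2l //; nra.
have CS_rest : 0 <= (I * sp - J * tp) ^+ 2 / (I + J).
  by rewrite divr_ge0 ?sqr_ge0 ?ltW ?addr_gt0.
have AM : (N / 2) ^+ 2 = N * d - d ^+ 2 + (N / 2 - d) ^+ 2 by field.
have AM_rest := sqr_ge0 (N / 2 - d).
have eq_gap : w * (f i - f p) ^+ 2 = w * (sp + tp) ^+ 2 by lra.
have /eqP : (I * sp - J * tp) ^+ 2 / (I + J) = 0 by lra.
rewrite mulf_eq0 invr_eq0 sqrf_eq0 subr_eq0 [I + J == 0]gt_eqF ?addr_gt0 // orbF => /eqP bal.
have /eqP : (N / 2 - d) ^+ 2 = 0 by lra.
rewrite sqrf_eq0 subr_eq0 => /eqP dE.
split; [|done|lra|lra|split; [lra | |done]].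
- apply/eqP; rewrite -(@eqrXn2 _ 2 _ _ isT (ltW gap_pos) (addr_ge0 sp0 tp0)).
  by rewrite (mulfI (lt0r_neq0 w_gt0) eq_gap).
- apply/eqP; rewrite -(@eqrXn2 _ 2 _ _ isT (le_trans d0 d_le_f0) d0); apply/eqP; lra.
Qed.

Lemma gap_pos_parts : sp = f i /\ tp = - f p.
Proof.
have [gapE _ _ _ _] := gap_equality_case.
have sp_ge : f i <= sp by rewrite le_max lexx.
have tp_ge : - f p <= tp by rewrite le_max lexx.
lra.
Qed.

Lemma gap_sign : 0 <= f i /\ f p <= 0.
Proof.
have [spE tpE] := gap_pos_parts.
by rewrite -spE -oppr_ge0 -tpE !le_max lexx !orbT.
Qed.

Lemma top_eq : f 0 = d /\ d = N / 2.
Proof. by have [_ _ _ _ []] := gap_equality_case. Qed.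

Lemma upper_block_eq k : (1 <= k <= i)%N -> f k = f i.
Proof.
have [_ _ upE _ _] := gap_equality_case; have [spE _] := gap_pos_parts.
have [fi0 _] := gap_sign.
have f_ge k' : (1 <= k' < i.+1)%N -> f i <= f k'.
  by move=> /andP[_ k'i]; apply: f_nonincr; rewrite -ltnS k'i.
have sqrE := @ler_sum_nat_eq _ 1 i.+1 (fun k => f k ^+ 2) (fun=> f i ^+ 2).
rewrite sumr_const_nat subn1 -mulr_natl -spE -upE in sqrE.
move=> ki; apply/eqP; rewrite -(@eqrXn2 _ 2 _ _ isT (le_trans fi0 (f_ge k ki)) fi0).
rewrite -spE; apply/eqP/sqrE => // k' /f_ge; rewrite spE; nra.
Qed.

Lemma lower_block_eq k : (p <= k < n)%N -> f k = f p.
Proof.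
have [_ _ _ lowE _] := gap_equality_case; have [_ tpE] := gap_pos_parts.
have [_ fp0] := gap_sign; have [_ _ n_p] := gap_indices.
have f_le k' : (p <= k' < n)%N -> f k' <= f p by apply: f_nonincr.
have sqrE := @ler_sum_nat_eq _ p n (fun k => f k ^+ 2) (fun=> f p ^+ 2).
rewrite sumr_const_nat n_p -mulr_natl -sqrrN -tpE -lowE in sqrE.
move=> kpn; have fk_le0 : 0 <= - f k by have := f_le k kpn; lra.
apply/eqP; rewrite -eqr_opp -(@eqrXn2 _ 2 _ _ isT fk_le0) ?oppr_ge0 //.
rewrite -tpE !sqrrN; apply/eqP; apply: sqrE => // k' /f_le; rewrite tpE; nra.
Qed.

Lemma middle_block_eq0 k : (i < k < p)%N -> f k = 0.
Proof.
have [_ _ _ _ [midE _ _]] := gap_equality_case.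
have sqrE := @ler_sum_nat_eq _ i.+1 p (fun k => f k ^+ 2) (fun=> 0).
rewrite sumr_const_nat mul0rn in sqrE.
move=> kip; apply/eqP; rewrite -sqrf_eq0; apply/eqP.
by apply: sqrE => // k' _; rewrite sqr_ge0.
Qed.

Let natr_IJ : (i + j + 1)%:R = I + J :> R.
Proof. by rewrite addn1 -addnS natrD. Qed.

Lemma gap_block_sqr :
  f i ^+ 2 = (N / 2) ^+ 2 * (J / (I * (I + J))) /\
  f p ^+ 2 = (N / 2) ^+ 2 * (I / (J * (I + J))).
Proof.
have [_ bal _ _ _] := gap_equality_case; have [spE tpE] := gap_pos_parts.
rewrite spE tpE in bal.
have balance : I * f i + J * f p = 0 by rewrite bal mulrN addNr.
by apply: balanced_sqr balance gap_sqr; rewrite gt_eqF ?addr_gt0.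
Qed.

Lemma upper_gap_value :
  f i = N / 2 * Num.sqrt ((j.+1)%:R / (i * (i + j + 1))%:R).
Proof.
have [fi0 _] := gap_sign; have [fiE _] := gap_block_sqr.
by rewrite natrM natr_IJ; apply: sqrtr_value; rewrite ?divr_ge0 ?ler0n.
Qed.

Lemma lower_gap_value :
  f p = - (N / 2 * Num.sqrt (i%:R / (j.+1 * (i + j + 1))%:R)).
Proof.
have [_ fp0] := gap_sign; have [_ fpE] := gap_block_sqr.
apply/eqP; rewrite -eqr_oppLR; apply/eqP.
by rewrite natrM natr_IJ; apply: sqrtr_value; rewrite ?sqrrN ?oppr_ge0 ?divr_ge0 ?ler0n.
Qed.

Lemma gap_extremal_sequence :
  [/\ 0 <= f i /\ f p <= 0, f 0 = d /\ d = N / 2,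
      forall k, (1 <= k <= i)%N ->
        f k = N / 2 * Num.sqrt ((j.+1)%:R / (i * (i + j + 1))%:R),
      forall k, (p <= k < n)%N ->
        f k = - (N / 2 * Num.sqrt (i%:R / (j.+1 * (i + j + 1))%:R))
    & forall k, (i < k < p)%N -> f k = 0].
Proof.
split; [exact: gap_sign | exact: top_eq | | | exact: middle_block_eq0].
- by move=> k /upper_block_eq ->; apply: upper_gap_value.
- by move=> k /lower_block_eq ->; apply: lower_gap_value.
Qed.

End GapExtremal.

Theorem mainTheorem2 (R : rcfType) (n i j : nat) (e : rel 'I_n) (lam : seq R) :
  (2 <= n)%N -> (1 <= i <= n.-1)%N -> (j <= n.-1)%N ->
  symmetric e ->
  sorted_spectrum (adjmx R e) lam ->
  eig lam i.+1 - eig lam (n - j)%N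
    = n%:R / 2 * Num.sqrt ((i + j + 1)%:R / (i * j.+1)%:R) ->
  [/\ eig lam i.+1 >= 0 /\ 0 >= eig lam (n - j)%N,
      eig lam 1 = avg_degree R e /\ avg_degree R e = n%:R / 2,
      (forall k, (2 <= k <= i.+1)%N ->
         eig lam k = n%:R / 2 * Num.sqrt ((j.+1)%:R / (i * (i + j + 1))%:R)),
      (forall k, (n - j <= k <= n)%N ->
         eig lam k = - (n%:R / 2 * Num.sqrt (i%:R / (j.+1 * (i + j + 1))%:R)))
    & (forall k, (i.+2 <= k <= n - j - 1)%N -> eig lam k = 0)].
Proof.
move=> n_ge2 /andP[i_gt0 i_le] _ e_sym [size_lam lam_sorted charA] gap.
have n_gt0 : (0 < n)%N by lia.
have i_lt_n : (i < n)%N by lia.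
pose f k := nth 0 lam k.
have f_nonincr a b : (a <= b < n)%N -> f b <= f a.
  by rewrite -size_lam; apply: sorted_ge_nth.
have A_sym := trmx_adjmx R e_sym.
have sum_sqr : \sum_(0 <= k < n) f k ^+ 2 = n%:R * avg_degree R e.
  rewrite -sum_adjmxE // -mxtrace_adjmx_sqr // -(sum_sqr_spectrum A_sym charA).
  by rewrite [RHS](big_nth 0) size_lam.
have d_le_f0 : avg_degree R e <= f 0.
  rewrite -(ler_pM2l (ltr0Sn _ n.-1)) prednK // -sum_adjmxE //.
  apply: (sum_mx_le_spectral_bound A_sym charA) => x x_lam.
  by rewrite -(nth_index 0 x_lam) f_nonincr // -size_lam index_mem.
have [sign top upper lower middle] :=
  gap_extremal_sequence i_gt0 i_lt_n f_nonincr sum_sqr d_le_f0 gap.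
split=> // k k_range; [apply: upper | apply: lower | apply: middle]; lia.
Qed.
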